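(* Let $k,n$ be positive integers and suppose there exist complex $k\times n$ matrices $A_1,\dots,A_k$ such that $A_iA_i^t=I_k$ for every $i\in[k]$ and $A_iA_j^t=-A_jA_i^t$ for all distinct $i,j\in[k]$. Then there exists an anticommuting family $e_1,\dots,e_k\in\mathbb{C}^{(n+2k)\times(n+2k)}$ such that $\mathrm{rk}(e_i^2)=k$ for every $i$, $e_1^2=e_2^2=\dots=e_k^2$, and $e_i^3=0$ for every $i$.
   Context: A family $e_1,\dots,e_k$ of complex square matrices is called anticommuting if $e_ie_j=-e_je_i$ for all distinct $i,j$. $A^t$ denotes the transpose; $\mathrm{rk}$ is matrix rank. *)

From HB Require Import structures.
From mathcomp Require Import all_boot all_order all_algebra.
Set Implicit Arguments. Unset Strict Implicit. Unset Printing Implicit Defensive.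
Import GRing.Theory Num.Theory.
Local Open Scope ring_scope.

Definition anticommuting (R : pzRingType) (k m : nat) (e : 'I_k -> 'M[R]_m) : Prop :=
  forall i j : 'I_k, i != j -> e i *m e j = - (e j *m e i).

From HB Require Import structures.
From mathcomp Require Import all_boot all_order all_algebra.
Import GRing.Theory Num.Theory.
Local Open Scope ring_scope.

(* With respect to the splitting [k + n + k], take
   [e_i = [[0, A_i, 0], [0, 0, A_i^T], [0, 0, 0]]].  Then [e_i e_j] is zero
   except for the block [A_i A_j^T] in the top right corner: the hypotheses
   make the family anticommute and give every [e_i^2] the same corner block
   [1], of rank [k], while a third factor kills the corner, so [e_i^3 = 0]. *)

Section CliffordLift.
Variables (R : pzRingType) (k n : nat).

Definition proj1_mx : 'M[R]_(k, k + n + k) := row_mx (row_mx 1%:M 0) 0.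
Definition proj2_mx : 'M[R]_(n, k + n + k) := row_mx (row_mx 0 1%:M) 0.
Definition proj3_mx : 'M[R]_(k, k + n + k) := row_mx 0 1%:M.

Let projE := (tr_row_mx, trmx0, trmx1, mul_row_col, mul1mx, mul0mx, add0r, addr0).

Lemma proj1_mx_tr : proj1_mx *m proj1_mx^T = 1%:M.
Proof. by rewrite !projE. Qed.

Lemma proj2_mx_tr : proj2_mx *m proj2_mx^T = 1%:M.
Proof. by rewrite !projE. Qed.

Lemma proj3_mx_tr : proj3_mx *m proj3_mx^T = 1%:M.
Proof. by rewrite !projE. Qed.

Lemma proj2_proj1_tr : proj2_mx *m proj1_mx^T = 0.
Proof. by rewrite !projE. Qed.

Lemma proj3_proj1_tr : proj3_mx *m proj1_mx^T = 0.
Proof. by rewrite !projE. Qed.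

Lemma proj3_proj2_tr : proj3_mx *m proj2_mx^T = 0.
Proof. by rewrite !projE. Qed.

(* [proj_i^T *m B *m proj_j] is [B] placed in block position [(i, j)]. *)
Definition clifford_lift (B : 'M[R]_(k, n)) : 'M[R]_(k + n + k) :=
  proj1_mx^T *m B *m proj2_mx + proj2_mx^T *m B^T *m proj3_mx.

Lemma clifford_lift_mul (B D : 'M[R]_(k, n)) :
  clifford_lift B *m clifford_lift D = proj1_mx^T *m (B *m D^T) *m proj3_mx.
Proof.
rewrite /clifford_lift mulmxDl !mulmxDr !mulmxA.
rewrite -!(mulmxA _ proj2_mx) -!(mulmxA _ proj3_mx) proj2_proj1_tr proj2_mx_tr.
by rewrite proj3_proj1_tr proj3_proj2_tr !mulmx0 !mul0mx mulmx1 add0r !addr0.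
Qed.

Lemma proj3_clifford_lift (B : 'M[R]_(k, n)) : proj3_mx *m clifford_lift B = 0.
Proof.
by rewrite /clifford_lift mulmxDr !mulmxA proj3_proj1_tr proj3_proj2_tr
  !mul0mx addr0.
Qed.

Lemma clifford_lift_mul3 (B D E : 'M[R]_(k, n)) :
  clifford_lift B *m clifford_lift D *m clifford_lift E = 0.
Proof.
by rewrite clifford_lift_mul -(mulmxA _ proj3_mx) proj3_clifford_lift mulmx0.
Qed.

End CliffordLift.

Arguments clifford_lift {R k n}.

Lemma mxrank_proj_corner (F : fieldType) (k n : nat) (M : 'M[F]_k) :
  \rank ((proj1_mx F k n)^T *m M *m proj3_mx F k n) = \rank M.
Proof.
have free_of m (P : 'M[F]_(m, _)) : P *m P^T = 1%:M -> row_free P.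
  by move=> PPt; apply/row_freeP; exists P^T.
rewrite mxrankMfree ?free_of ?proj3_mx_tr // -mxrank_tr trmx_mul trmxK.
by rewrite mxrankMfree ?free_of ?proj1_mx_tr // mxrank_tr.
Qed.

Theorem proposition6p2 (C : numClosedFieldType) (k n : nat)
  (hk : (0 < k)%N) (hn : (0 < n)%N)
  (A : 'I_k -> 'M[C]_(k, n))
  (hA1 : forall i : 'I_k, A i *m (A i)^T = 1%:M)
  (hA2 : forall i j : 'I_k, i != j -> A i *m (A j)^T = - (A j *m (A i)^T)) :
  exists e : 'I_k -> 'M[C]_(n + 2 * k),
    [/\ anticommuting e,
        forall i : 'I_k, \rank (e i *m e i) = k,
        forall i j : 'I_k, e i *m e i = e j *m e j
      & forall i : 'I_k, e i *m e i *m e i = 0].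
Proof.
rewrite (_ : (n + 2 * k = k + n + k)%N); last by rewrite mul2n -addnn addnCA addnA.
exists (fun i => clifford_lift (A i)); split=> [i j ij | i | i j | i].
- by rewrite !clifford_lift_mul hA2 // mulmxN mulNmx.
- by rewrite clifford_lift_mul hA1 mxrank_proj_corner mxrank1.
- by rewrite !clifford_lift_mul !hA1.
- exact: clifford_lift_mul3.
Qed.
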